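(* Let $A=\sum_{i\ge0}A_iz^{i-k}dz\in\mathfrak{g}((z))dz$ with $k>1$ and $A_0\ne0$, and suppose $A_0,\dots,A_{k-2}$ all lie in some torus (abelian subalgebra of semisimple elements) $\mathfrak{t}\subset\mathfrak{g}$. Set $H_i=\bigcap_{j=0}^{k-i-2}\{h\in G:\mathrm{Ad}_hA_j=A_j\}$ for $i=0,\dots,k-2$, $H_{k-1}=G$, and $\mathfrak{h}_i=\mathrm{Lie}\,H_i$. Then there exists a unique $(k-1)$-tuple $(\hat g^{(1)},\dots,\hat g^{(k-1)})$ with $\hat g^{(l)}=\prod_{i=1}^\infty\exp(z^iX^{(l)}_i)\in H_{k-l}(\mathbb{C}[[z]])$ (the ordered product $\lim_{j\to\infty}\exp(z^jX^{(l)}_j)\cdots\exp(zX^{(l)}_1)$), $X^{(l)}_i\in\mathrm{range}(\mathrm{ad}_{A_{l-1}}|_{\mathfrak{h}_{k-l}})$, such that for each $l\ge1$, $A^{(l)}=\sum_{i\ge0}A^{(l)}_iz^{i-k}dz:=\hat g^{(l)}\cdots\hat g^{(1)}[A]$ satisfies $A^{(l)}_i=A_i$ for $i=0,\dots,k-2$ and $A^{(l)}\in\mathfrak{h}_{k-l-1}((z))dz$.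
   Context: $G$ is a connected complex reductive group with Lie algebra $\mathfrak{g}$; $z$ is a formal variable. For $g\in G(\mathbb{C}((z)))$ the gauge action is $g[A]=gAg^{-1}+dg\,g^{-1}$ (in any faithful representation). For $l=k-1$ the condition $A^{(k-1)}\in\mathfrak{h}_0((z))dz$ uses $\mathfrak{h}_0$ as defined. *)

From HB Require Import structures.
From mathcomp Require Import all_boot all_order all_algebra.
From mathcomp Require Import complex reals.
Set Implicit Arguments. Unset Strict Implicit. Unset Printing Implicit Defensive.
Import Order.TTheory GRing.Theory Num.Theory.
Local Open Scope ring_scope.


Section Defs.
Variables (R : realType) (n : nat).
Local Notation C := (R[i]).
Local Notation M := ('M[C]_n).

Definition lie (X Y : M) : M := X *m Y - Y *m X.

Definition lie_subalgebra (g : M -> Prop) : Prop :=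
  [/\ g 0,
      (forall X Y, g X -> g Y -> g (X + Y)),
      (forall (c : C) X, g X -> g (c *: X)) &
      (forall X Y, g X -> g Y -> g (lie X Y))].

(* g acts completely reducibly on C^n (row vectors, v |-> v *m X):
   every g-stable subspace has a g-stable complement.  For the Lie algebra
   of a reductive group in a faithful representation this holds. *)
Definition g_stable (g : M -> Prop) (U : M) : Prop :=
  forall X, g X -> (U *m X <= U)%MS.
Definition completely_reducible (g : M -> Prop) : Prop :=
  forall U : M, g_stable g U ->
    exists W : M, [/\ g_stable g W, (U :&: W == (0 : M))%MS & (U + W == 1%:M)%MS].

Definition semisimple (X : M) : Prop := diagonalizable X.

Definition torus (g t : M -> Prop) : Prop :=
  [/\ lie_subalgebra t,
      (forall X, t X -> g X),
      (forall X Y, t X -> t Y -> lie X Y = 0) &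
      (forall X, t X -> semisimple X)].

(* h_i = Lie H_i, where H_i = cap_{j=0}^{k-i-2} Stab_G(A_j) (H_{k-1} = G):
   h_i = { Y in g | [Y, A_j] = 0 for 0 <= j <= k-i-2 }
   (the condition j <= k-i-2 is written j + i + 2 <= k to handle i = k-1). *)
Definition hsub (g : M -> Prop) (A : nat -> M) (k i : nat) (Y : M) : Prop :=
  g Y /\ forall j, (j + i + 2 <= k)%N -> lie Y (A j) = 0.

Definition in_ad_range (h : M -> Prop) (B X : M) : Prop :=
  exists Y, h Y /\ X = lie B Y.

(* A power series  sum_{m>=0} g_m z^m  is a  nat -> M.
   A Laurent series  sum_{i>=0} A_i z^{i-k}  (pole order <= k, k fixed)
   is also represented by its coefficient sequence  nat -> M. *)

(* product of power series (also: Laurent (shift k) times power series,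
   and power series times Laurent (shift k), the result having shift k) *)
Definition smul (f g : nat -> M) : nat -> M :=
  fun N => \sum_(i < N.+1) f i *m g (N - i)%N.

Definition sone : nat -> M := fun N => if N == 0%N then 1%:M else 0.

Fixpoint sinv_seq (g : nat -> M) (N : nat) : seq M :=
  match N with
  | 0 => [:: invmx (g 0%N)]
  | N'.+1 => let s := sinv_seq g N' in
      rcons s (- (invmx (g 0%N) *m
          \sum_(i < N'.+1) g i.+1 *m nth 0 s (N' - i)%N))
  end.
Definition sinv (g : nat -> M) : nat -> M := fun N => nth 0 (sinv_seq g N) N.

(* d g / dz, as a Laurent series with shift k:
   coefficient of z^{i-k} is (i-k+1) g_{i-k+1} if i >= k, else 0 *)
Definition sderiv_shift (k : nat) (g : nat -> M) : nat -> M :=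
  fun i => if (k <= i)%N then ((i - k).+1)%:R *: g (i - k).+1 else 0.

(* gauge action  g[A] = g A g^-1 + (dg/dz) g^-1  (A Laurent with shift k) *)
Definition gauge (k : nat) (g A : nat -> M) : nat -> M :=
  fun i => smul (smul g A) (sinv g) i + smul (sderiv_shift k g) (sinv g) i.

(* exp(z^i X) as a power series (i >= 1):
   coefficient of z^m is X^(m/i)/(m/i)! if i | m, else 0 *)
Definition sexp (i : nat) (X : M) : nat -> M :=
  fun m => if (i %| m)%N then ((m %/ i)`!%:R)^-1 *: (X ^+ (m %/ i))%R else 0.

Fixpoint ordprod_fin (X : nat -> M) (j : nat) : nat -> M :=
  match j with
  | 0 => sone
  | j'.+1 => smul (sexp j'.+1 (X j'.+1)) (ordprod_fin X j')
  end.

(* g = lim_{j -> oo} exp(z^j X_j) ... exp(z X_1)  (z-adic limit: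
   each coefficient is eventually constant and equal to that of g) *)
Definition is_ordprod (X : nat -> M) (g : nat -> M) : Prop :=
  forall N, exists J, forall j, (J <= j)%N -> ordprod_fin X j N = g N.

Fixpoint lprod (gh : nat -> nat -> M) (l : nat) : nat -> M :=
  match l with
  | 0 => sone
  | l'.+1 => smul (gh l'.+1) (lprod gh l')
  end.

End Defs.

Definition good_tuple (R : realType) (n : nat) (g : 'M[R[i]]_n -> Prop)
    (A : nat -> 'M[R[i]]_n) (k : nat) (gh : nat -> nat -> 'M[R[i]]_n) : Prop :=
  forall l, (1 <= l <= k.-1)%N ->
    [/\
        (exists X : nat -> 'M[R[i]]_n,
            (forall i, (1 <= i)%N -> in_ad_range (hsub g A k (k - l)) (A l.-1) (X i))
            /\ is_ordprod X (gh l)),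
        (* ghat_l stabilises A_j for j <= l-2 (part of ghat_l in H_{k-l}(C[[z]])) *)
        (forall j m, (j + 2 <= l)%N -> gh l m *m A j = A j *m gh l m),
        (forall i, (i <= k - 2)%N -> gauge k (lprod gh l) A i = A i) &
        (forall i, hsub g A k (k - l).-1 (gauge k (lprod gh l) A i))].

From HB Require Import structures.
From mathcomp Require Import all_boot all_order all_algebra.
From mathcomp Require Import complex reals.
From mathcomp Require Import ring zify.
From Stdlib Require Import FunctionalExtensionality IndefiniteDescription.
Import Order.TTheory GRing.Theory Num.Theory.
Local Open Scope ring_scope.

(* Since A_(l-1) is semisimple, ad A_(l-1) is diagonalizable, so every matrix is
   the sum of an element of its kernel and an element of its image, and the
   kernel meets the image trivially.  Gauging by exp(z^i X) with X in h_(k-l)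
   fixes the coefficients of index < i + l - 1 and adds [X, A_(l-1)] to the
   coefficient of index i + l - 1, so there is exactly one X_i in the image of
   ad A_(l-1) making that coefficient commute with A_(l-1).  Choosing the X_i
   for i = 1, 2, ... in turn and passing to the z-adic limit gives ghat^(l);
   repeating this for l = 1, ..., k - 1 gives the tuple and its uniqueness. *)

Set Implicit Arguments. Unset Strict Implicit. Unset Printing Implicit Defensive.

Section AdDecomposition.
Variables (R : realType) (n : nat).
Local Notation C := (R[i]).
Local Notation M := ('M[C]_n).

Lemma lieDl (a U V : M) : lie (U + V) a = lie U a + lie V a.
Proof. by rewrite /lie mulmxDl mulmxDr addrACA opprD. Qed.

Lemma lieDr (a U V : M) : lie a (U + V) = lie a U + lie a V.
Proof. by rewrite /lie mulmxDl mulmxDr addrACA opprD. Qed.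

Lemma lieZl (a U : M) (c : C) : lie (c *: U) a = c *: lie U a.
Proof. by rewrite /lie scalerBr -scalemxAl -scalemxAr. Qed.

Lemma lieZr (a U : M) (c : C) : lie a (c *: U) = c *: lie a U.
Proof. by rewrite /lie scalerBr -scalemxAl -scalemxAr. Qed.

Lemma lie0l (a : M) : lie 0 a = 0.
Proof. by rewrite /lie mul0mx mulmx0 subrr. Qed.

Lemma lie0r (a : M) : lie a 0 = 0.
Proof. by rewrite /lie mul0mx mulmx0 subrr. Qed.

Lemma lieC (U V : M) : lie U V = - lie V U.
Proof. by rewrite /lie opprB. Qed.

Lemma lieNl (U V : M) : lie (- U) V = - lie U V.
Proof. by rewrite /lie mulNmx mulmxN opprB opprK addrC. Qed.

Lemma lieNr (a U : M) : lie a (- U) = - lie a U.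
Proof. by rewrite /lie mulmxN mulNmx opprB opprK addrC. Qed.

Lemma lieBl (U V W : M) : lie (U - V) W = lie U W - lie V W.
Proof. by rewrite lieDl lieNl. Qed.

Lemma lieBr (a U V : M) : lie a (U - V) = lie a U - lie a V.
Proof. by rewrite lieDr lieNr. Qed.

Lemma lie_sumr (a : M) I (r : seq I) (P : pred I) (F : I -> M) :
  lie a (\sum_(i <- r | P i) F i) = \sum_(i <- r | P i) lie a (F i).
Proof. exact: (big_morph _ (lieDr a) (lie0r a)). Qed.

Lemma lie_eq0 (U V : M) : lie U V = 0 <-> comm_mx U V.
Proof. by rewrite /lie /comm_mx; split => [/eqP|->]; rewrite ?subr_eq0 ?subrr // => /eqP. Qed.

Lemma lie_lie_eq0 (U V W : M) : lie U W = 0 -> lie V W = 0 -> lie (lie U V) W = 0.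
Proof.
move=> /lie_eq0 hU /lie_eq0 hV; apply/lie_eq0.
by rewrite /comm_mx /lie mulmxBl mulmxBr -!mulmxA hU hV !mulmxA hU hV.
Qed.

Lemma hsub_lie_subalgebra (g : M -> Prop) (A : nat -> M) k i :
  lie_subalgebra g -> lie_subalgebra (hsub g A k i).
Proof.
case=> g0 gD gZ gL; split.
- by split => // j _; exact: lie0l.
- move=> U V [gU hU] [gV hV]; split=> [|j hj]; first exact: gD.
  by rewrite lieDl hU // hV // addr0.
- move=> c U [gU hU]; split=> [|j hj]; first exact: gZ.
  by rewrite lieZl hU // scaler0.
- move=> U V [gU hU] [gV hV]; split=> [|j hj]; first exact: gL.
  by apply: lie_lie_eq0; auto.
Qed.

(* [adker a cs] is the polynomial [prod_(c <- cs) (1 - c^-1 ad a)] in [ad a];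
   when [cs] lists the nonzero eigenvalues of [ad a], it projects onto the
   kernel of [ad a] along its image, and [adpre a cs] is the polynomial
   [(1 - adker a cs) / ad a]. *)
Fixpoint adker (a : M) (cs : seq C) (Y : M) : M :=
  match cs with
  | [::] => Y
  | c :: cs' => adker a cs' Y - c^-1 *: lie a (adker a cs' Y)
  end.

Fixpoint adpre (a : M) (cs : seq C) (Y : M) : M :=
  match cs with
  | [::] => 0
  | c :: cs' => adpre a cs' Y + c^-1 *: adker a cs' Y
  end.

Lemma adker_decomp a cs Y : Y = adker a cs Y + lie a (adpre a cs Y).
Proof.
elim: cs => [|c cs IH] /=; first by rewrite lie0r addr0.
by rewrite lieDr lieZr {1}IH addrACA addNr addr0.
Qed.

Lemma adkerD a cs U V : adker a cs (U + V) = adker a cs U + adker a cs V.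
Proof. by elim: cs => [|c cs IH] //=; rewrite IH lieDr scalerDr opprD addrACA. Qed.

Lemma adker0 a cs : adker a cs 0 = 0.
Proof. by elim: cs => [|c cs IH] //=; rewrite IH lie0r scaler0 subrr. Qed.

Lemma adker_sum a cs I (r : seq I) (P : pred I) (F : I -> M) :
  adker a cs (\sum_(i <- r | P i) F i) = \sum_(i <- r | P i) adker a cs (F i).
Proof. exact: (big_morph _ (adkerD a cs) (adker0 a cs)). Qed.

Lemma adker_lie a cs U : adker a cs (lie a U) = lie a (adker a cs U).
Proof. by elim: cs => [|c cs IH] //=; rewrite IH [RHS]lieBr lieZr. Qed.

Lemma adker_eigen a cs W (lam : C) : lie a W = lam *: W ->
  adker a cs W = (\prod_(c <- cs) (1 - c^-1 * lam)) *: W.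
Proof.
move=> HW; elim: cs => [|c cs IH] /=; first by rewrite big_nil scale1r.
rewrite IH lieZr HW big_cons !scalerA -scalerBl; congr (_ *: _).
by ring.
Qed.

Lemma adker_id a cs c : lie a c = 0 -> adker a cs c = c.
Proof. by move=> h; elim: cs => [|d cs IH] //=; rewrite IH h scaler0 subr0. Qed.

Lemma adker_adpre_closed (h : M -> Prop) a cs Y :
  lie_subalgebra h -> h a -> h Y -> h (adker a cs Y) /\ h (adpre a cs Y).
Proof.
case=> h0 hD hZ hL ha hY; elim: cs => [|c cs [IH1 IH2]] //=; split.
  by apply: hD => //; rewrite -scaleN1r scalerA; apply/hZ/hL.
by apply: hD => //; apply: hZ.
Qed.

Definition ad_splitting (a : M) (cs : seq C) := forall Y, lie a (adker a cs Y) = 0.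

Lemma lie_eigen (a Ei Ej Y : M) (di dj : C) :
  a *m Ei = di *: Ei -> Ej *m a = dj *: Ej ->
  lie a (Ei *m Y *m Ej) = (di - dj) *: (Ei *m Y *m Ej).
Proof.
move=> h1 h2; rewrite /lie !mulmxA h1 -(mulmxA (Ei *m Y)) h2.
by rewrite -scalemxAl -scalemxAl -scalemxAr scalerBl.
Qed.

(* With [a = P^-1 diag(d) P], the matrices [e_i Y e_j] built from the
   spectral idempotents [e_i] of [a] are eigenvectors of [ad a] with
   eigenvalue [d_i - d_j] and span the whole matrix space. *)
Lemma diagonalizable_ad_splitting (a : M) :
  diagonalizable a -> exists cs, ad_splitting a cs.
Proof.
case=> P Pu /(diagonalizable_forLR Pu) [d ->]; rewrite mxpoly.conjVmx //.
set Q := invmx P.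
have PQ : P *m Q = 1%:M by rewrite mulmxV.
pose e (i : 'I_n) := Q *m delta_mx i i *m P.
have esum : \sum_i e i = 1%:M.
  by rewrite /e -mulmx_suml -mulmx_sumr -mx1_sum_delta mulmx1 mulVmx.
have dE i : diag_mx d *m delta_mx i i = d 0 i *: delta_mx i i.
  apply/matrixP=> r s; rewrite mul_diag_mx !mxE.
  by case: (eqVneq r i) => [->|]; rewrite ?mulr0.
have Ed i : delta_mx i i *m diag_mx d = d 0 i *: delta_mx i i.
  apply/matrixP=> r s; rewrite mul_mx_diag !mxE mulrC.
  by case: (s =P i) => [->|ne] //; rewrite andbF !mulr0.
have ae i : Q *m diag_mx d *m P *m e i = d 0 i *: e i.
  by rewrite /e !mulmxA -(mulmxA _ P Q) PQ mulmx1 -(mulmxA Q) dE -scalemxAr -scalemxAl.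
have ea i : e i *m (Q *m diag_mx d *m P) = d 0 i *: e i.
  rewrite /e !mulmxA -(mulmxA _ P Q) PQ mulmx1 -(mulmxA Q (delta_mx i i)) Ed.
  by rewrite -scalemxAr -scalemxAl.
set A := Q *m diag_mx d *m P in ae ea *; clearbody e A.
exists [seq d 0 i - d 0 j | i <- enum 'I_n, j <- enum 'I_n] => Y.
have -> : Y = \sum_i \sum_j (e i *m Y *m e j).
  by under eq_bigr do rewrite -mulmx_sumr esum mulmx1; rewrite -mulmx_suml esum mul1mx.
rewrite adker_sum lie_sumr big1 // => i _.
rewrite adker_sum lie_sumr big1 // => j _.
have Hl := lie_eigen Y (ae i) (ea j).
rewrite (adker_eigen _ Hl) lieZr Hl scalerA.
have [->|nz] := eqVneq (d 0 i - d 0 j) 0; first by rewrite mulr0 scale0r.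
rewrite (big_rem (d 0 i - d 0 j)) /=; last first.
  by apply/allpairsP; exists (i, j); rewrite !mem_enum.
by rewrite mulVf // subrr !mul0r scale0r.
Qed.

Section Splitting.
Variables (a : M) (cs : seq C).
Hypothesis split_a : ad_splitting a cs.

Lemma ad_splitting_ker_im W U : lie a W = 0 -> W = lie a U -> W = 0.
Proof. by move=> HW WU; rewrite -(adker_id cs HW) WU adker_lie split_a. Qed.

Definition ad_correction (c : M) : M := lie a (adpre a cs (adpre a cs c)).

Lemma ad_correctionP c : c + lie (ad_correction c) a = adker a cs c.
Proof.
rewrite /ad_correction; set Z := adpre a cs c; set Z' := adpre a cs Z.
have -> : lie a Z' = Z - adker a cs Z.
  by rewrite {1}(adker_decomp a cs Z) addrAC subrr add0r.
by rewrite lieC lieBr split_a subr0 {1}(adker_decomp a cs c) addrK.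
Qed.

Lemma adpre_ker c : lie a c = 0 -> lie a (adpre a cs c) = 0.
Proof.
move=> h; have e := adker_decomp a cs c; rewrite adker_id // in e.
by apply: (@addrI _ c); rewrite addr0 -e.
Qed.

Lemma ad_correction_ker c : lie a c = 0 -> ad_correction c = 0.
Proof. by move=> h; rewrite /ad_correction !adpre_ker. Qed.

Lemma ad_correction_uniq c X Y U V : X = lie a U -> Y = lie a V ->
  lie (c + lie X a) a = 0 -> lie (c + lie Y a) a = 0 -> X = Y.
Proof.
move=> hX hY hcX hcY; apply/eqP; rewrite -subr_eq0; apply/eqP.
have hW : lie (lie (X - Y) a) a = 0.
  rewrite (lieBl X) (lieBl (lie X a)); apply/eqP; rewrite subr_eq0; apply/eqP.
  by apply: (@addrI _ (lie c a)); rewrite -!lieDl hcX hcY.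
have hW' : lie a (lie a (X - Y)) = 0.
  by move: hW; rewrite (lieC (X - Y)) lieNl lieC opprK.
have ker : lie a (X - Y) = 0 by apply: ad_splitting_ker_im hW' (erefl _).
by apply: ad_splitting_ker_im ker _; rewrite hX hY -lieBr.
Qed.

End Splitting.

Lemma in_ad_range_mem (h : M -> Prop) a X :
  lie_subalgebra h -> h a -> in_ad_range h a X -> h X.
Proof. by case=> _ _ _ hL ha [Y [hY ->]]; apply: hL. Qed.

Lemma ad_correction_in_ad_range (h : M -> Prop) a cs c :
  lie_subalgebra h -> h a -> h c -> in_ad_range h a (ad_correction a cs c).
Proof.
move=> hsub ha hc; exists (adpre a cs (adpre a cs c)); split=> //.
have [_ h1] := adker_adpre_closed cs hsub ha hc.
by have [_ h2] := adker_adpre_closed cs hsub ha h1.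
Qed.

End AdDecomposition.

Section SeriesRing.
Variables (R : realType) (n' : nat).
Local Notation n := n'.+1.
Local Notation C := (R[i]).
Local Notation M := ('M[C]_n).
Implicit Types f g h G D E B : nat -> M.
Local Notation sone := (@sone R n).

Lemma sum_triangle (F : nat -> nat -> M) K :
  \sum_(a < K.+1) \sum_(b < (K - a)%N.+1) F a b =
  \sum_(p < K.+1) \sum_(a < p.+1) F a (p - a)%N.
Proof.
elim: K => [|K IH]; first by rewrite !big_ord1.
rewrite big_ord_recr /= [RHS]big_ord_recr /= subnn big_ord1.
rewrite (eq_bigr (fun a : 'I_K.+1 =>
  \sum_(b < (K - a)%N.+1) F a b + F a (K.+1 - a)%N)); last first.
  by move=> a _; rewrite subSn -1?ltnS // big_ord_recr.
by rewrite big_split /= IH -addrA [in RHS](big_ord_recr K.+1) /= subnn.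
Qed.

Lemma smul_rev f g i : smul f g i = \sum_(j < i.+1) f (i - j)%N *m g j.
Proof.
rewrite /smul (reindex_inj rev_ord_inj) /=; apply: eq_bigr => j _.
by rewrite subSS subKn // -ltnS.
Qed.

Definition sadd f g : nat -> M := fun i => f i + g i.
Definition szero : nat -> M := fun _ => 0.
Definition szpow (k : nat) : nat -> M := fun i => if i == k then 1%:M else 0.
Definition sshift (k : nat) f : nat -> M := fun i => if (k <= i)%N then f (i - k)%N else 0.
Definition sderiv f : nat -> M := fun m => (m.+1)%:R *: f m.+1.

Lemma saddC f g : sadd f g = sadd g f.
Proof. by apply: functional_extensionality => i; rewrite /sadd addrC. Qed.

Lemma saddA f g h : sadd f (sadd g h) = sadd (sadd f g) h.
Proof. by apply: functional_extensionality => i; rewrite /sadd addrA. Qed.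

Lemma sadd0 f : sadd f szero = f.
Proof. by apply: functional_extensionality => i; rewrite /sadd addr0. Qed.

Lemma smulA f g h : smul (smul f g) h = smul f (smul g h).
Proof.
apply: functional_extensionality => N; symmetry; rewrite /smul.
under eq_bigr => j _ do rewrite mulmx_sumr.
rewrite (sum_triangle (fun a b => f a *m (g b *m h (N - a - b)%N))).
apply: eq_bigr => p _; rewrite mulmx_suml; apply: eq_bigr => a _.
rewrite mulmxA; congr (_ *m h _).
by have := ltn_ord a; have := ltn_ord p; lia.
Qed.

Lemma smul1l f : smul sone f = f.
Proof.
apply: functional_extensionality => N; rewrite /smul big_ord_recl /= /sone eqxx.
by rewrite mul1mx subn0 big1 ?addr0 // => i _; rewrite mul0mx.
Qed.

Lemma smul1r f : smul f sone = f.
Proof.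
apply: functional_extensionality => N; rewrite smul_rev big_ord_recl /= /sone eqxx.
by rewrite mulmx1 subn0 big1 ?addr0 // => i _; rewrite mulmx0.
Qed.

Lemma smulDl f g h : smul (sadd f g) h = sadd (smul f h) (smul g h).
Proof.
apply: functional_extensionality => N; rewrite /smul /sadd -big_split.
by apply: eq_bigr => i _; rewrite mulmxDl.
Qed.

Lemma smulDr f g h : smul f (sadd g h) = sadd (smul f g) (smul f h).
Proof.
apply: functional_extensionality => N; rewrite /smul /sadd -big_split.
by apply: eq_bigr => i _; rewrite mulmxDr.
Qed.

Lemma smulr0 f : smul f szero = szero.
Proof.
by apply: functional_extensionality => N; rewrite /smul big1 // => i _; rewrite mulmx0.
Qed.

Lemma smul_coef0 f g : smul f g 0%N = f 0%N *m g 0%N.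
Proof. by rewrite /smul big_ord1. Qed.

Lemma size_sinv_seq g N : size (sinv_seq g N) = N.+1.
Proof. by elim: N => //= N IH; rewrite size_rcons IH. Qed.

Lemma nth_sinv_seq g N j : (j <= N)%N -> nth 0 (sinv_seq g N) j = sinv g j.
Proof.
elim: N j => [|N IH] j le; first by case: j le.
rewrite /= nth_rcons size_sinv_seq.
case: ltngtP le => // [lt _|-> _]; first exact: IH.
by rewrite /sinv /= nth_rcons size_sinv_seq ltnn eqxx.
Qed.

Lemma sinv_coef0 g : sinv g 0%N = invmx (g 0%N).
Proof. by []. Qed.

Lemma sinvS g N : sinv g N.+1 =
  - (invmx (g 0%N) *m \sum_(i < N.+1) g i.+1 *m sinv g (N - i)%N).
Proof.
rewrite /sinv /= nth_rcons size_sinv_seq ltnn eqxx.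
by congr (- (_ *m _)); apply: eq_bigr => i _; rewrite nth_sinv_seq // leq_subr.
Qed.

Lemma smul_sinv g : g 0%N \in unitmx -> smul g (sinv g) = sone.
Proof.
move=> gu; apply: functional_extensionality => -[|N].
  by rewrite smul_coef0 sinv_coef0 mulmxV.
rewrite /smul big_ord_recl /= subn0 sinvS mulmxN mulmxA mulmxV // mul1mx.
rewrite /sone /=; apply/eqP; rewrite addrC subr_eq0; apply/eqP.
by apply: eq_bigr => i _; rewrite subSS.
Qed.

Lemma sinv_smul g : g 0%N \in unitmx -> smul (sinv g) g = sone.
Proof.
move=> gu; set h := sinv g.
have hu : h 0%N \in unitmx by rewrite /h sinv_coef0 unitmx_inv.
have -> : g = sinv h by rewrite -[g]smul1r -(smul_sinv hu) -smulA smul_sinv // smul1l.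
exact: smul_sinv.
Qed.

Lemma sinv_uniq u v : u 0%N \in unitmx -> smul v u = sone -> sinv u = v.
Proof. by move=> uu e; rewrite -[sinv u]smul1l -e smulA smul_sinv // smul1r. Qed.

Lemma smulIr f g G : G 0%N \in unitmx -> smul f G = smul g G -> f = g.
Proof.
by move=> Gu e; rewrite -[f]smul1r -[g]smul1r -(smul_sinv Gu) -!smulA e.
Qed.

Lemma sum_ord_eq (F : nat -> M) k i :
  \sum_(j < i.+1) (if j == k :> nat then F j else 0) = if (k <= i)%N then F k else 0.
Proof. by rewrite -big_mkcond /= big_ord1_eq ltnS. Qed.

Lemma szpow_smul k f : smul (szpow k) f = sshift k f.
Proof.
apply: functional_extensionality => i; rewrite /smul /szpow /sshift.
rewrite -(sum_ord_eq (fun _ => f (i - k)%N)); apply: eq_bigr => j _.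
by case: eqP => [->|_]; rewrite ?mul1mx ?mul0mx.
Qed.

Lemma smul_szpow k f : smul f (szpow k) = sshift k f.
Proof.
apply: functional_extensionality => i; rewrite smul_rev /szpow /sshift.
rewrite -(sum_ord_eq (fun _ => f (i - k)%N)); apply: eq_bigr => j _.
by case: eqP => [->|_]; rewrite ?mulmx1 ?mulmx0.
Qed.

Lemma smul_szpowC k f g : smul f (smul (szpow k) g) = smul (szpow k) (smul f g).
Proof. by rewrite -smulA smul_szpow -szpow_smul smulA. Qed.

Lemma sderiv_smul f g : sderiv (smul f g) = sadd (smul (sderiv f) g) (smul f (sderiv g)).
Proof.
apply: functional_extensionality => m; rewrite /sderiv /sadd /smul scaler_sumr.
rewrite (eq_bigr (fun i : 'I_m.+2 => i%:R *: (f i *m g (m.+1 - i)%N) +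
   (m.+1 - i)%N%:R *: (f i *m g (m.+1 - i)%N))); last first.
  by move=> i _; rewrite -scalerDl -natrD subnKC // -ltnS.
rewrite big_split /=; congr (_ + _).
  rewrite big_ord_recl /= scale0r add0r; apply: eq_bigr => i _.
  by rewrite /bump /= add1n subSS scalemxAl.
rewrite big_ord_recr /= subnn scale0r addr0; apply: eq_bigr => i _.
by rewrite subSn -1?ltnS // scalemxAr.
Qed.

Lemma sderiv_one : sderiv sone = szero.
Proof. by apply: functional_extensionality => m; rewrite /sderiv /sone /= scaler0. Qed.

Lemma gaugeE k G D : gauge k G D =
  sadd (smul (smul G D) (sinv G)) (smul (smul (szpow k) (sderiv G)) (sinv G)).
Proof. by rewrite szpow_smul. Qed.

Lemma gauge_smul k G D : G 0%N \in unitmx ->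
  smul (gauge k G D) G = sadd (smul G D) (smul (szpow k) (sderiv G)).
Proof. by move=> Gu; rewrite gaugeE smulDl !smulA sinv_smul // !smul1r. Qed.

Lemma gauge_uniq k G D B : G 0%N \in unitmx ->
  smul B G = sadd (smul G D) (smul (szpow k) (sderiv G)) -> B = gauge k G D.
Proof. by move=> Gu e; apply: (smulIr Gu); rewrite gauge_smul. Qed.

Lemma gauge_comp k E G D : E 0%N \in unitmx -> G 0%N \in unitmx ->
  gauge k (smul E G) D = gauge k E (gauge k G D).
Proof.
move=> Eu Gu; have EGu : smul E G 0%N \in unitmx by rewrite smul_coef0 unitmx_mul Eu Gu.
symmetry; apply: gauge_uniq => //.
rewrite -smulA gauge_smul // smulDl smulA gauge_smul // smulDr sderiv_smul smulDr.
by rewrite !smulA smul_szpowC -!saddA [sadd _ (smul _ _)]saddC.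
Qed.

Lemma gauge1 k D : gauge k sone D = D.
Proof.
symmetry; apply: gauge_uniq; first by rewrite /sone /= unitmx1.
by rewrite smul1r smul1l sderiv_one smulr0 sadd0.
Qed.

End SeriesRing.

Section SeriesExp.
Variables (R : realType) (n' : nat).
Local Notation n := n'.+1.
Local Notation C := (R[i]).
Local Notation M := ('M[C]_n).
Local Notation sone := (@sone R n).

Definition invfact (p : nat) : C := (p`!%:R)^-1.
Definition adpow (X : M) (p : nat) (Y : M) : M := iter p (lie X) Y.

Lemma invfact0 : invfact 0 = 1.
Proof. by rewrite /invfact fact0 invr1. Qed.

Lemma invfactS q : q.+1%:R * invfact q.+1 = invfact q.
Proof. by rewrite /invfact factS natrM invfM mulrA divff ?mul1r // pnatr_eq0. Qed.

Lemma adpow0 (X : M) p : adpow X p 0 = 0.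
Proof. by elim: p => //= p IH; rewrite IH lie0r. Qed.

Lemma adpow1 (X : M) p : adpow X p.+1 1%:M = 0.
Proof. by rewrite /adpow iterSr /lie mulmx1 mul1mx subrr; apply: adpow0. Qed.

Lemma adpow_closed (h : M -> Prop) (X Y : M) p :
  (forall U, h U -> h (lie X U)) -> h Y -> h (adpow X p Y).
Proof. by move=> hL hY; elim: p => //= p IH; apply: hL. Qed.

Definition conj_coef (X Y : M) p : M :=
  \sum_(a < p.+1) (invfact a * invfact (p - a)%N) *: (X ^+ a * Y * (- X) ^+ (p - a)%N).

Lemma conj_coefS (X Y : M) p :
  p.+1%:R *: conj_coef X Y p.+1 = X * conj_coef X Y p - conj_coef X Y p * X.
Proof.
rewrite /conj_coef scaler_sumr.
rewrite (eq_bigr (fun a : 'I_p.+2 =>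
   (a%:R * invfact a * invfact (p.+1 - a)%N) *: (X ^+ a * Y * (- X) ^+ (p.+1 - a)%N) +
   ((p.+1 - a)%N%:R * invfact a * invfact (p.+1 - a)%N) *:
     (X ^+ a * Y * (- X) ^+ (p.+1 - a)%N))); last first.
  move=> a _; rewrite scalerA -scalerDl; congr (_ *: _).
  by rewrite -!mulrA -mulrDl -natrD subnKC // -ltnS.
rewrite big_split /=; congr (_ + _).
  rewrite big_ord_recl /= !mul0r scale0r add0r mulr_sumr.
  apply: eq_bigr => b _; rewrite /bump /= add1n subSS invfactS.
  by rewrite -scalerAr exprS !mulrA.
rewrite big_ord_recr /= subnn !mul0r scale0r addr0 mulr_suml -sumrN.
apply: eq_bigr => a _; have le : (a <= p)%N by rewrite -ltnS.
rewrite subSn // mulrAC invfactS [invfact (p - a)%N * _]mulrC exprSr.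
by rewrite !mulrA scalerAl mulrN.
Qed.

Lemma conj_coefE (X Y : M) p : conj_coef X Y p = invfact p *: adpow X p Y.
Proof.
elim: p => [|p IH].
  by rewrite /conj_coef big_ord1 /= subnn invfact0 mulr1 !expr0 mulr1 mul1r.
have nz : p.+1%:R != 0 :> C by rewrite pnatr_eq0.
rewrite -[conj_coef _ _ _](scalerK nz) conj_coefS IH.
rewrite -scalerAr -scalerAl -scalerBr scalerA /adpow iterS /lie !mulmxE.
by rewrite -invfactS mulrA mulVf // mul1r.
Qed.

(* The coefficient of [z^(m p)] in [exp(z^m X) Y exp(-z^m X)], for constant [Y]. *)
Lemma conj_coef_adpow (X Y : M) p :
  \sum_(a < p.+1) (invfact a *: X ^+ a) *m Y *m (invfact (p - a)%N *: (- X) ^+ (p - a)%N)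
  = invfact p *: adpow X p Y.
Proof.
rewrite -conj_coefE /conj_coef; apply: eq_bigr => a _.
by rewrite !mulmxE -!scalerAl -scalerAr scalerA.
Qed.

Lemma sum_dvdn m i (T : nat -> M) : (0 < m)%N ->
  \sum_(j < i.+1) (if (m %| j)%N then T j else 0) = \sum_(s < (i %/ m).+1) T (m * s)%N.
Proof.
move=> m0; elim: i => [|i IH]; first by rewrite div0n !big_ord1 dvdn0 muln0.
rewrite big_ord_recr /= IH (divnS _ m0).
have [h|h] /= := boolP (m %| i.+1)%N; last by rewrite addr0.
rewrite add1n [RHS]big_ord_recr /=; congr (_ + T _).
by rewrite -[LHS](divnK h) (divnS _ m0) h add1n mulnC.
Qed.

Lemma smul_sexpl m (X : M) (F : nat -> M) i : (0 < m)%N -> smul (sexp m X) F i =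
  \sum_(s < (i %/ m).+1) (invfact s *: X ^+ s) *m F (i - m * s)%N.
Proof.
move=> m0; rewrite /smul /sexp.
rewrite (eq_bigr (fun j : 'I_i.+1 => if (m %| j)%N then
   (invfact (j %/ m) *: X ^+ (j %/ m)) *m F (i - j)%N else 0)); last first.
  by move=> j _; case: ifP; rewrite ?mul0mx.
rewrite (@sum_dvdn m i (fun j => (invfact (j %/ m) *: X ^+ (j %/ m)) *m F (i - j)%N)) //.
by apply: eq_bigr => s _; rewrite mulKn.
Qed.

Lemma smul_sexpr m (X : M) (F : nat -> M) i : (0 < m)%N -> smul F (sexp m X) i =
  \sum_(s < (i %/ m).+1) F (i - m * s)%N *m (invfact s *: X ^+ s).
Proof.
move=> m0; rewrite smul_rev /sexp.
rewrite (eq_bigr (fun j : 'I_i.+1 => if (m %| j)%N then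
   F (i - j)%N *m (invfact (j %/ m) *: X ^+ (j %/ m)) else 0)); last first.
  by move=> j _; case: ifP; rewrite ?mulmx0.
rewrite (@sum_dvdn m i (fun j => F (i - j)%N *m (invfact (j %/ m) *: X ^+ (j %/ m)))) //.
by apply: eq_bigr => s _; rewrite mulKn.
Qed.

Lemma sexp_coef0 m (X : M) : sexp m X 0%N = 1%:M.
Proof. by rewrite /sexp dvdn0 div0n fact0 invr1 scale1r expr0. Qed.

Lemma sexp0 m : (0 < m)%N -> sexp m (0 : M) = sone.
Proof.
move=> m0; apply: functional_extensionality => q; rewrite /sexp /sone.
case: ifP => h; last by case: eqP => // q0; move: h; rewrite q0 dvdn0.
case: (q %/ m)%N (divnK h) => [|s] qE.
  by rewrite mul0n in qE; rewrite -qE /= fact0 invr1 scale1r expr0.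
by rewrite expr0n /= scaler0; case: eqP => // q0; move: qE m0; rewrite q0 mulSn; lia.
Qed.

Lemma sexp_subn m (X : M) i s : (0 < m)%N -> (s <= i %/ m)%N ->
  sexp m X (i - m * s)%N =
  if (m %| i)%N then invfact (i %/ m - s)%N *: X ^+ (i %/ m - s)%N else 0.
Proof.
move=> m0 le; have le' : (m * s <= i)%N by rewrite mulnC -leq_divRL.
have d : (m %| i - m * s)%N = (m %| i)%N.
  by rewrite -[in RHS](subnK le') dvdn_addl // dvdn_mulr.
by rewrite /sexp d; case: ifP => // _; rewrite mulnC divnBMl.
Qed.

Lemma smul_sexpN m (X : M) : (0 < m)%N -> smul (sexp m X) (sexp m (- X)) = sone.
Proof.
move=> m0; apply: functional_extensionality => i; rewrite smul_sexpl //.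
rewrite (eq_bigr (fun s : 'I_(i %/ m).+1 => if (m %| i)%N then
  (invfact s *: X ^+ s) *m 1%:M *m
    (invfact (i %/ m - s)%N *: (- X) ^+ (i %/ m - s)%N) else 0)); last first.
  move=> s _; rewrite sexp_subn -1?ltnS //.
  by case: ifP; rewrite ?mulmx1 ?mulmx0.
have [h|h] := boolP (m %| i)%N; last first.
  by rewrite big1 // /sone; case: eqP => // i0; move: h; rewrite i0 dvdn0.
rewrite conj_coef_adpow /sone; case: (i %/ m)%N (divnK h) => [|K] iE.
  by rewrite mul0n in iE; rewrite -iE /= invfact0 scale1r.
by rewrite adpow1 scaler0 -iE mulSn; case: m m0 {h iE}.
Qed.

Lemma sinv_sexp m (X : M) : (0 < m)%N -> sinv (sexp m X) = sexp m (- X).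
Proof.
move=> m0; apply: sinv_uniq; first by rewrite sexp_coef0 unitmx1.
by rewrite -{2}(opprK X) smul_sexpN.
Qed.

Lemma sexp_conj m (X : M) D i : (0 < m)%N ->
  smul (smul (sexp m X) D) (sexp m (- X)) i =
  \sum_(p < (i %/ m).+1) invfact p *: adpow X p (D (i - m * p)%N).
Proof.
move=> m0; rewrite smul_sexpr //; set K := (i %/ m)%N.
pose F a b := (invfact b *: X ^+ b) *m D (i - m * (b + a))%N *m
  (invfact a *: (- X) ^+ a).
rewrite (eq_bigr (fun a : 'I_K.+1 => \sum_(b < (K - a)%N.+1) F a b)); last first.
  move=> a _; rewrite smul_sexpl // mulnC divnBMl mulmx_suml.
  by apply: eq_bigr => b _; rewrite /F mulnDr addnC subnDA mulnC.
rewrite sum_triangle; apply: eq_bigr => p _.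
rewrite (reindex_inj rev_ord_inj) /= -conj_coef_adpow; apply: eq_bigr => a _.
have le : (a <= p)%N by rewrite -ltnS.
by rewrite /F subSS subKn // subnKC.
Qed.

Definition slogderiv m (X : M) : nat -> M := fun q => if q == m.-1 then m%:R *: X else 0.

Lemma sderiv_sexp m (X : M) : (0 < m)%N -> sderiv (sexp m X) = smul (slogderiv m X) (sexp m X).
Proof.
move=> m0; apply: functional_extensionality => q; rewrite /smul /slogderiv.
rewrite (eq_bigr (fun j : 'I_q.+1 => if j == m.-1 :> nat then
   (m%:R *: X) *m sexp m X (q - m.-1)%N else 0)); last first.
  by move=> j _; case: eqP => [->|_] //; rewrite mul0mx.
rewrite (sum_ord_eq (fun _ => (m%:R *: X) *m sexp m X (q - m.-1)%N)).
case: leqP => hm; last first.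
  rewrite /sderiv /sexp; case: ifP => [h|_]; last by rewrite scaler0.
  by have := dvdn_leq (ltn0Sn q) h; move: hm; case: m m0 {h} => // m _ /=; lia.
have le1 : (1 <= q.+1 %/ m)%N by rewrite leq_divRL // mul1n; move: hm; case: m m0.
have -> : (q - m.-1)%N = (q.+1 - m * 1)%N by rewrite muln1; case: m m0 {hm le1}.
rewrite sexp_subn // /sderiv /sexp; case: ifP => h; last by rewrite scaler0 mulmx0.
case: (q.+1 %/ m)%N (divnK h) le1 => [//|t] qE _.
rewrite subn1 /= -[in LHS]qE -/(invfact t.+1) scalerA natrM.
rewrite -scalemxAl -scalemxAr scalerA mulmxE -exprS; congr (_ *: _).
by rewrite mulrAC invfactS mulrC.
Qed.

Lemma gauge_sexp k m (X : M) D i : (0 < m)%N ->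
  gauge k (sexp m X) D i =
  \sum_(p < (i %/ m).+1) invfact p *: adpow X p (D (i - m * p)%N)
  + sshift k (slogderiv m X) i.
Proof.
move=> m0; rewrite gaugeE /sadd sinv_sexp // sexp_conj //; congr (_ + _).
by rewrite sderiv_sexp // smulA smulA smul_sexpN // smul1r szpow_smul.
Qed.

End SeriesExp.

Section Truncation.
Variables (R : realType) (n' : nat).
Local Notation n := n'.+1.
Local Notation C := (R[i]).
Local Notation M := ('M[C]_n).
Implicit Types f g G D : nat -> M.

Definition agree_upto N f g := forall i, (i <= N)%N -> f i = g i.

Lemma agree_upto_le N N' f g : (N' <= N)%N -> agree_upto N f g -> agree_upto N' f g.
Proof. by move=> le h i le'; apply/h/(leq_trans le'). Qed.

Lemma smul_agree_upto N f f' g g' :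
  agree_upto N f f' -> agree_upto N g g' -> agree_upto N (smul f g) (smul f' g').
Proof.
move=> hf hg i le; rewrite /smul; apply: eq_bigr => j _.
have lej : (j <= i)%N by rewrite -ltnS.
by rewrite hf ?(leq_trans lej) // hg // (leq_trans (leq_subr _ _)).
Qed.

Lemma sinv_agree_upto N g g' : agree_upto N g g' -> agree_upto N (sinv g) (sinv g').
Proof.
elim: N => [|N IH] h i le.
  by move: le; rewrite leqn0 => /eqP ->; rewrite !sinv_coef0 h.
have [le'|lt] := leqP i N; first by apply: IH => //; apply: agree_upto_le h.
have -> : i = N.+1 by apply/eqP; rewrite eqn_leq le lt.
rewrite !sinvS (h 0%N (leq0n _)); congr (- (_ *m _)); apply: eq_bigr => j _.
have lej : (j <= N)%N by rewrite -ltnS.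
by rewrite h ?ltnS // IH ?leq_subr //; apply: agree_upto_le h.
Qed.

(* [0 < k] is needed: the [dg/dz] term of coefficient [N] reads [g] at [N - k + 1]. *)
Lemma gauge_agree_upto k G G' D N : (0 < k)%N -> agree_upto N G G' ->
  gauge k G D N = gauge k G' D N.
Proof.
move=> k0 h; rewrite /gauge; congr (_ + _);
  apply: (smul_agree_upto _ (sinv_agree_upto h)) (leqnn N).
  by apply: smul_agree_upto => // i _.
by move=> i le; rewrite /sderiv_shift; case: ifP => // ki; rewrite h //; lia.
Qed.

Lemma ordprod_fin_coef0 (X : nat -> M) J : ordprod_fin X J 0%N = 1%:M.
Proof. by elim: J => //= J IH; rewrite smul_coef0 sexp_coef0 IH mulmx1. Qed.

Lemma ordprod_finS_low (X : nat -> M) J i : (i <= J)%N ->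
  ordprod_fin X J.+1 i = ordprod_fin X J i.
Proof.
move=> le; rewrite /= smul_sexpl // divn_small ?ltnS // big_ord1.
by rewrite invfact0 scale1r expr0 mul1mx muln0 subn0.
Qed.

Lemma ordprod_fin_stable (X : nat -> M) J J' i : (J <= J')%N -> (i <= J)%N ->
  ordprod_fin X J' i = ordprod_fin X J i.
Proof.
move=> le1 le2; elim: J' le1 => [|J' IH]; first by rewrite leqn0 => /eqP ->.
rewrite leq_eqVlt => /orP [/eqP <-//|]; rewrite ltnS => le.
by rewrite ordprod_finS_low ?IH // (leq_trans le2).
Qed.

Lemma eq_ordprod_fin (X X' : nat -> M) J :
  (forall j, (1 <= j <= J)%N -> X j = X' j) -> ordprod_fin X J = ordprod_fin X' J.
Proof.
elim: J => [|J IH] h //=; rewrite h ?leqnn // IH // => j /andP [j1 j2].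
by apply: h; rewrite j1 ltnW.
Qed.

Lemma ordprod_fin_comm (X : nat -> M) (B : M) J m :
  (forall i, (1 <= i)%N -> comm_mx (X i) B) -> comm_mx (ordprod_fin X J m) B.
Proof.
have sexp_comm i (Y : M) q : comm_mx Y B -> comm_mx (sexp i Y q) B.
  rewrite /comm_mx /sexp => h; case: ifP => _; last by rewrite mul0mx mulmx0.
  rewrite -scalemxAl -scalemxAr; congr (_ *: _).
  elim: (q %/ i)%N => [|s IH]; first by rewrite expr0 mul1mx mulmx1.
  by rewrite exprS -!mulmxE -mulmxA IH !mulmxA h.
have smul_comm (f g : nat -> M) N : (forall i, comm_mx (f i) B) ->
    (forall i, comm_mx (g i) B) -> comm_mx (smul f g N) B.
  move=> hf hg; rewrite /comm_mx /smul mulmx_suml mulmx_sumr.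
  by apply: eq_bigr => i _; rewrite -mulmxA hg !mulmxA hf.
move=> h; elim: J m => [|J IH] m /=.
  by rewrite /comm_mx /sone; case: eqP => _; rewrite ?mul1mx ?mulmx1 ?mul0mx ?mulmx0.
by apply: smul_comm => // i; apply/sexp_comm/h.
Qed.

(* The partial products stabilise: coefficient [m] is fixed after [m] factors. *)
Definition ordprod (X : nat -> M) : nat -> M := fun m => ordprod_fin X m m.

Lemma ordprodP (X : nat -> M) : is_ordprod X (ordprod X).
Proof. by move=> N; exists N => j le; rewrite /ordprod (ordprod_fin_stable _ le). Qed.

Lemma is_ordprodE (X : nat -> M) G : is_ordprod X G -> G = ordprod X.
Proof.
move=> h; apply: functional_extensionality => N; have [J HJ] := h N.
by rewrite -(HJ (maxn J N)) ?leq_maxl // /ordprod (ordprod_fin_stable _ (leq_maxr J N)).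
Qed.

Lemma ordprod_agree_upto (X : nat -> M) N : agree_upto N (ordprod X) (ordprod_fin X N).
Proof. by move=> i le; rewrite /ordprod (ordprod_fin_stable _ le). Qed.

Lemma ordprod_coef0 (X : nat -> M) : ordprod X 0%N = 1%:M.
Proof. exact: ordprod_fin_coef0. Qed.

Lemma gauge_sexp_closed (h : M -> Prop) k m (X : M) D : (0 < m)%N ->
  lie_subalgebra h -> h X -> (forall j, h (D j)) ->
  forall i, h (gauge k (sexp m X) D i).
Proof.
move=> m0 [h0 hD hZ hL] hX hDj i; rewrite gauge_sexp //; apply: (hD).
  apply: (big_ind h) => // p _; apply: hZ; apply: adpow_closed (hDj _) => U; exact: hL.
by rewrite /sshift /slogderiv; case: ifP => // _; case: ifP => // _; apply: hZ.
Qed.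

Lemma gauge_sexp_low k m L (X : M) D i : (0 < m)%N -> (L.+1 < k)%N ->
  (forall j, (j < L)%N -> lie X (D j) = 0) -> (i <= m + L)%N ->
  gauge k (sexp m X) D i = D i + (if i == (m + L)%N then lie X (D L) else 0).
Proof.
move=> m0 Lk hlow le; rewrite gauge_sexp //.
have -> : sshift k (slogderiv m X) i = 0.
  by rewrite /sshift /slogderiv; case: ifP => // ki; case: eqP => // e; move: ki e; lia.
rewrite addr0 big_ord_recl /= invfact0 scale1r muln0 subn0; congr (_ + _).
have hm : (m * (i %/ m) <= i)%N by rewrite mulnC leq_divM.
case E: (i %/ m)%N hm => [|K] hm.
  rewrite big_ord0; case: eqP => // e.
  have : (0 < i %/ m)%N by rewrite divn_gt0 // e leq_addr.
  by rewrite E.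
rewrite big_ord_recl /= big1 ?addr0; last first.
  move=> p _; rewrite /bump /= !add1n.
  have hp : (m * p.+2 <= i)%N.
    by apply: leq_trans hm; rewrite leq_mul2l ltnS ltn_ord orbT.
  have h2 : (2 * m <= m * p.+2)%N by rewrite mulnC leq_mul2l orbT.
  rewrite add0n /adpow -iterS -iterS iterSr hlow; last by lia.
  by rewrite -/(adpow X p.+1 0) adpow0 scaler0.
have hm1 : (m <= i)%N by move: hm; rewrite mulnS; lia.
rewrite /bump /= /invfact /= invr1 scale1r muln1.
by case: eqP => [->|ne]; [rewrite addKn | rewrite hlow //; lia].
Qed.

End Truncation.

Section Level.
Variables (R : realType) (n' : nat).
Local Notation n := n'.+1.
Local Notation C := (R[i]).
Local Notation M := ('M[C]_n).
Variables (g : M -> Prop) (A : nat -> M) (k L : nat) (cs : seq C) (D : nat -> M).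
Local Notation a := (A L).
Local Notation h := (hsub g A k (k - L.+1)).

Definition partial_gauge (X : nat -> M) J := gauge k (ordprod_fin X J) D.

(* [corr_upto i] lists the corrections [X_1, ..., X_i]; [X_(i+1)] is the
   correction of the coefficient of [z^(i+1+L-k)] after the first [i] steps. *)
Fixpoint corr_upto (i : nat) : nat -> M :=
  match i with
  | 0 => fun _ => 0
  | i'.+1 => let X := corr_upto i' in
      let c := partial_gauge X i' (i'.+1 + L) in
      fun j => if j == i'.+1 then ad_correction a cs c else X j
  end.

Definition corr j := corr_upto j j.

Lemma corr_upto_stable i j : (j <= i)%N -> corr_upto i j = corr j.
Proof.
elim: i j => [|i IH] j le; first by move: le; rewrite leqn0 => /eqP ->.
rewrite /=; case: eqP => [->|ne]; first by rewrite /corr /= eqxx.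
by apply: IH; lia.
Qed.

Lemma corrS i : corr i.+1 = ad_correction a cs (partial_gauge corr i (i.+1 + L)).
Proof.
rewrite {1}/corr /= eqxx /partial_gauge (@eq_ordprod_fin _ _ _ corr) // => j.
by case/andP=> _ le; apply: corr_upto_stable.
Qed.

Lemma partial_gaugeS (X : nat -> M) J :
  partial_gauge X J.+1 = gauge k (sexp J.+1 (X J.+1)) (partial_gauge X J).
Proof. by rewrite /partial_gauge /= gauge_comp // ?sexp_coef0 ?ordprod_fin_coef0 unitmx1. Qed.

Lemma partial_gauge0 (X : nat -> M) : partial_gauge X 0 = D.
Proof. exact: gauge1. Qed.

Lemma gauge_ordprod (X : nat -> M) i : (0 < k)%N ->
  gauge k (ordprod X) D i = partial_gauge X i i.
Proof. by move=> k0; apply/gauge_agree_upto/ordprod_agree_upto. Qed.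

Section Invariants.
Hypotheses (gsub : lie_subalgebra g) (Lk : (L.+1 < k)%N) (split_a : ad_splitting a cs)
  (ha : h a) (hDA : forall i, (i <= k - 2)%N -> D i = A i) (hD : forall i, h (D i))
  (tor : forall i, (i <= k - 2)%N -> lie (A i) a = 0).

Let h_subalgebra : lie_subalgebra h := hsub_lie_subalgebra A k (k - L.+1) gsub.

Lemma h_lie_low U j : h U -> (j < L)%N -> lie U (A j) = 0.
Proof. by case=> _ hU lt; apply: hU; lia. Qed.

Lemma partial_gauge_low (X : nat -> M) J : (forall i, (1 <= i <= J)%N -> h (X i)) ->
  forall j, (j <= L)%N -> partial_gauge X J j = A j.
Proof.
elim: J => [|J IH] hX j le; first by rewrite partial_gauge0 hDA //; lia.
have hX' i : (1 <= i <= J)%N -> h (X i) by case/andP=> h1 h2; apply: hX; rewrite h1 ltnW.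
have hlow j' : (j' < L)%N -> lie (X J.+1) (partial_gauge X J j') = 0.
  by move=> lt; rewrite (IH hX' j' (ltnW lt)); apply: h_lie_low lt; apply: hX; rewrite leqnn.
rewrite partial_gaugeS (gauge_sexp_low (ltn0Sn J) Lk hlow); last by lia.
by rewrite (IH hX' j le); case: eqP => [e|_]; [lia | rewrite addr0].
Qed.

Lemma partial_gaugeS_low (X : nat -> M) J : (forall i, (1 <= i <= J.+1)%N -> h (X i)) ->
  forall i, (i <= J.+1 + L)%N -> partial_gauge X J.+1 i =
    partial_gauge X J i + (if i == (J.+1 + L)%N then lie (X J.+1) a else 0).
Proof.
move=> hX i le.
have hX' i' : (1 <= i' <= J)%N -> h (X i') by case/andP=> h1 h2; apply: hX; rewrite h1 ltnW.
have hlow j : (j < L)%N -> lie (X J.+1) (partial_gauge X J j) = 0.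
  move=> lt; rewrite (partial_gauge_low hX' (ltnW lt)).
  by apply: h_lie_low lt; apply: hX; rewrite leqnn.
by rewrite partial_gaugeS (gauge_sexp_low (ltn0Sn J) Lk hlow le) (partial_gauge_low hX' (leqnn L)).
Qed.

Lemma partial_gauge_stable (X : nat -> M) J J' i :
  (forall i, (1 <= i <= J')%N -> h (X i)) ->
  (J <= J')%N -> (i <= J + L)%N -> partial_gauge X J' i = partial_gauge X J i.
Proof.
move=> hX le1 le2; elim: J' le1 hX => [|J' IH]; first by rewrite leqn0 => /eqP ->.
rewrite leq_eqVlt => /orP [/eqP <-//|]; rewrite ltnS => le hX.
rewrite partial_gaugeS_low //; last by lia.
case: eqP => [e|_]; first lia.
by rewrite addr0 IH // => i' /andP [h1 h2]; apply: hX; rewrite h1 ltnW.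
Qed.

Lemma corr_h_invariant J :
  (forall i, h (partial_gauge corr J i)) /\ (forall i, (1 <= i <= J)%N -> h (corr i)).
Proof.
elim: J => [|J [IH1 IH2]]; first by rewrite partial_gauge0; split=> // -[].
have hJ : h (corr J.+1).
  rewrite corrS; apply: (in_ad_range_mem h_subalgebra ha).
  exact: ad_correction_in_ad_range.
have IH2' i : (1 <= i <= J.+1)%N -> h (corr i).
  case/andP=> h1 h2; have [->//|ne] := eqVneq i J.+1.
  by apply: IH2; rewrite h1 -ltnS ltn_neqAle ne h2.
split=> [i|]; last exact: IH2'.
by rewrite partial_gaugeS; apply: gauge_sexp_closed.
Qed.

Lemma corr_h i : (1 <= i)%N -> h (corr i).
Proof. by move=> i1; have [_ hc] := corr_h_invariant i; apply: hc; rewrite i1 leqnn. Qed.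

Lemma corr_h_upto J : forall i, (1 <= i <= J)%N -> h (corr i).
Proof. by move=> i /andP [i1 _]; apply: corr_h. Qed.

Lemma partial_gauge_head J i : (i <= k - 2)%N -> partial_gauge corr J i = A i.
Proof.
elim: J i => [|J IH] i le; first by rewrite partial_gauge0 hDA.
have [hle|hlt] := leqP (J.+1 + L) (k - 2).
  have c0 : lie a (partial_gauge corr J (J.+1 + L)) = 0.
    by rewrite IH // lieC tor // oppr0.
  by rewrite partial_gaugeS corrS ad_correction_ker // sexp0 // gauge1 IH.
rewrite (partial_gaugeS_low (@corr_h_upto J.+1)); last by lia.
by case: eqP => [e|_]; [lia | rewrite addr0 IH].
Qed.

Lemma partial_gauge_comm J i : (i <= J + L)%N -> lie (partial_gauge corr J i) a = 0.
Proof.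
elim: J i => [|J IH] i le.
  by rewrite partial_gauge0 hDA ?tor //; lia.
rewrite (partial_gaugeS_low (@corr_h_upto J.+1)); last by lia.
case: eqP => [->|ne]; last by rewrite addr0 IH //; lia.
by rewrite corrS ad_correctionP // lieC split_a oppr0.
Qed.

Lemma corr_in_ad_range i : (1 <= i)%N -> in_ad_range h a (corr i).
Proof.
case: i => // i _; rewrite corrS; apply: ad_correction_in_ad_range => //.
by have [] := corr_h_invariant i.
Qed.

Lemma ordprod_corr_comm j m : (j < L)%N -> comm_mx (ordprod corr m) (A j).
Proof. by move=> lt; apply: ordprod_fin_comm => i i1; apply/lie_eq0/h_lie_low/lt/corr_h. Qed.

Lemma ordprod_corr_uniq (X : nat -> M) :
  (forall i, (1 <= i)%N -> in_ad_range h a (X i)) ->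
  (forall i, lie (gauge k (ordprod X) D i) a = 0) -> ordprod X = ordprod corr.
Proof.
move=> hXr hc.
have hXJ J i : (1 <= i <= J)%N -> h (X i).
  by case/andP=> i1 _; apply: (in_ad_range_mem h_subalgebra ha); apply: hXr.
suff eqX i j : (1 <= j <= i)%N -> X j = corr j.
  apply: functional_extensionality => m; rewrite /ordprod.
  by congr (_ _); apply: eq_ordprod_fin => j hj; apply: eqX hj.
elim: i j => [|i IH] j /andP [j1 j2]; first lia.
have [->|ne] := eqVneq j i.+1; last by apply: IH; lia.
set q := (i.+1 + L)%N; set c := partial_gauge corr i q.
have eo : partial_gauge X i = partial_gauge corr i.
  by rewrite /partial_gauge (eq_ordprod_fin (X' := corr)) // => j' ?; apply: IH; lia.
have [Y' [_ eY']] := hXr i.+1 isT.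
have [Y [_ eY]] := corr_in_ad_range (ltn0Sn i).
apply: (ad_correction_uniq (c := c) split_a eY' eY).
  have := hc q; rewrite gauge_ordprod; last lia.
  rewrite (partial_gauge_stable (hXJ q) (leq_addr L i.+1) (leqnn q)).
  by rewrite (partial_gaugeS_low (hXJ i.+1) (leqnn q)) eqxx eo.
have := @partial_gauge_comm i.+1 q (leqnn _).
by rewrite (partial_gaugeS_low (@corr_h_upto i.+1) (leqnn q)) eqxx.
Qed.

End Invariants.
End Level.

Section Construction.
Variables (R : realType) (n' : nat).
Local Notation n := n'.+1.
Local Notation C := (R[i]).
Local Notation M := ('M[C]_n).
Variables (g : M -> Prop) (A : nat -> M) (k : nat) (csf : nat -> seq C).

(* [level_form l] is [A^(l)], and [level_gauge l] is [ghat^(l)]. *)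
Fixpoint level_form (l : nat) : nat -> M :=
  if l is l'.+1 then gauge k (ordprod (corr A k l' (csf l') (level_form l'))) (level_form l')
  else A.

Definition level_gauge (l : nat) : nat -> M :=
  if l is l'.+1 then ordprod (corr A k l' (csf l') (level_form l')) else sone R n.

Lemma lprod_level_gauge_coef0 l : lprod level_gauge l 0%N = 1%:M.
Proof. by elim: l => //= l IH; rewrite smul_coef0 IH ordprod_coef0 mulmx1. Qed.

Lemma gauge_lprod_level l : gauge k (lprod level_gauge l) A = level_form l.
Proof.
elim: l => [|l IH] /=; first exact: gauge1.
by rewrite gauge_comp ?ordprod_coef0 ?lprod_level_gauge_coef0 ?unitmx1 // IH.
Qed.

Local Notation h L := (hsub g A k (k - L.+1)).

Hypotheses (gsub : lie_subalgebra g) (gA : forall i, g (A i)) (k1 : (1 < k)%N)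
  (tor : forall i j, (i <= k - 2)%N -> (j <= k - 2)%N -> lie (A i) (A j) = 0)
  (csfP : forall L, (L <= k - 2)%N -> ad_splitting (A L) (csf L)).

Lemma A_in_h L : (L.+1 < k)%N -> h L (A L).
Proof. by move=> Lk; split=> [|j hj]; [exact: gA | apply: tor; lia]. Qed.

Lemma lie_A_head L : (L.+1 < k)%N -> forall i, (i <= k - 2)%N -> lie (A i) (A L) = 0.
Proof. by move=> Lk i hi; apply: tor => //; lia. Qed.

Lemma ad_splitting_level L : (L.+1 < k)%N -> ad_splitting (A L) (csf L).
Proof. by move=> Lk; apply: csfP; lia. Qed.

Lemma hsubS L Y : h L Y -> lie Y (A L) = 0 -> h L.+1 Y.
Proof.
case=> gY hY hYL; split=> // j hj.
have [jL|jL|->] := ltngtP j L; [apply: hY | | exact: hYL]; move: hj jL; clear; lia.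
Qed.

Lemma level_form_inv L : (L < k)%N ->
  (forall i, (i <= k - 2)%N -> level_form L i = A i) /\ (forall i, h L (level_form L i)).
Proof.
elim: L => [|L IH] Lk; first by split=> // i; split=> // j; lia.
have [hDA hD] := IH (ltnW Lk).
have ha := A_in_h Lk; have torL := lie_A_head Lk; have splitL := ad_splitting_level Lk.
split=> i; rewrite /= gauge_ordprod; try lia.
  exact: (partial_gauge_head _ gsub Lk ha hDA hD torL).
apply: hsubS; first by have [] := corr_h_invariant (csf L) gsub ha hD i.
by apply: (partial_gauge_comm gsub Lk splitL ha hDA hD torL); rewrite leq_addr.
Qed.

Lemma level_gauge_good : good_tuple g A k level_gauge.
Proof.
move=> [|L] // /andP [_ lk]; have Lk : (L.+1 < k)%N by lia.
have [_ hD] := level_form_inv (ltnW Lk).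
have [hDA' hD'] := level_form_inv Lk.
have ha := A_in_h Lk.
split; rewrite ?gauge_lprod_level //.
- exists (corr A k L (csf L) (level_form L)); split; last exact: ordprodP.
  exact: corr_in_ad_range.
- by move=> j m hj; apply: (ordprod_corr_comm _ gsub Lk ha hD); lia.
- by move=> i; rewrite -subnS.
Qed.

Lemma good_tuple_uniq gh : good_tuple g A k gh ->
  forall l, (1 <= l <= k.-1)%N -> gh l = level_gauge l.
Proof.
move=> good.
have step L : (L.+1 < k)%N -> lprod gh L = lprod level_gauge L -> gh L.+1 = level_gauge L.+1.
  move=> Lk eL; have [hDA hD] := level_form_inv (ltnW Lk).
  have lL : (1 <= L.+1 <= k.-1)%N by apply/andP; split=> //; lia.
  have [[X [hX hord]] _ _ hc] := good L.+1 lL.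
  rewrite (is_ordprodE hord) /=.
  apply: (ordprod_corr_uniq gsub Lk (ad_splitting_level Lk) (A_in_h Lk) hDA hD (lie_A_head Lk) hX).
  have jL : (L + (k - L.+1).-1 + 2 <= k)%N by lia.
  move=> i; have [_ hci] := hc i; move: (hci L jL).
  rewrite /= (is_ordprodE hord) gauge_comp ?ordprod_coef0 ?unitmx1 //; last first.
    by rewrite eL lprod_level_gauge_coef0 unitmx1.
  by rewrite eL gauge_lprod_level.
have eq_lprod l : (l < k)%N -> lprod gh l = lprod level_gauge l.
  by elim: l => //= l IH lk; rewrite step ?IH //; lia.
by case=> // L /andP [_ lk]; apply: step; [|apply: eq_lprod]; lia.
Qed.

End Construction.

Theorem proposition4p2 (R : realType) (n : nat) (g : 'M[R[i]]_n -> Prop)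
    (A : nat -> 'M[R[i]]_n) (k : nat) :
  lie_subalgebra g -> completely_reducible g ->
  (forall i, g (A i)) ->
  (1 < k)%N -> A 0%N != 0 ->
  (exists t : 'M[R[i]]_n -> Prop, torus g t /\ forall i, (i <= k - 2)%N -> t (A i)) ->
  exists gh : nat -> nat -> 'M[R[i]]_n,
    good_tuple g A k gh /\
    forall gh', good_tuple g A k gh' ->
      forall l, (1 <= l <= k.-1)%N -> gh' l = gh l.
Proof.
(* The
   hypothesis [A_0 != 0] only rules out [n = 0]. *)
case: n g A => [|n'] g A gsub _ gA k1 A0 [t [[_ _ tcomm tss] tA]].
  by move: A0; rewrite flatmx0 eqxx.
have tor i j : (i <= k - 2)%N -> (j <= k - 2)%N -> lie (A i) (A j) = 0.
  by move=> /tA ti /tA tj; apply: tcomm.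
have [csf csfP] : exists csf : nat -> seq R[i],
    forall L, (L <= k - 2)%N -> ad_splitting (A L) (csf L).
  apply: (functional_choice (fun L cs => (L <= k - 2)%N -> ad_splitting (A L) cs)) => L.
  have [/tA/tss/diagonalizable_ad_splitting [cs hcs]|_] := boolP (L <= k - 2)%N.
    by exists cs.
  by exists [::].
exists (level_gauge A k csf); split; first exact: level_gauge_good.
by move=> gh good; apply: (good_tuple_uniq gsub gA k1 tor csfP good).
Qed.
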